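(* Let $G$ be a tight graph with dense set $T$ and co-components $G_1,\dots,G_r$, let $T_i=T\cap V(G_i)$, $m_i=|T_i|$, and let $p_i$ be the common degree in $G_i$ of the vertices of $T_i$. Suppose $m_i=p_i+1$ for every $i$. Then each $G_i$ is a tight graph with $m(G_i)=m_i$ whose set of dense vertices is $T_i$, and $G$ has a b-colouring with exactly $m(G)$ colours if and only if every $G_i$ has a b-colouring with exactly $m(G_i)$ colours.
   Context: A co-component of $G$ is the subgraph of $G$ induced by the vertex set of a connected component of the complement $\overline{G}$; distinct co-components are completely joined in $G$. A colouring of $G$ is a map $c:V(G)\to\mathbb{Z}^+$ with adjacent vertices receiving distinct colours. A vertex is b-chromatic under $c$ if it is adjacent to a vertex of every colour used by $c$ other than its own; a b-colouring is a colouring in which every colour class has a b-chromatic vertex. $m(G)$ is the largest $k$ such that $G$ has at least $k$ vertices of degree at least $k-1$; a vertex of degree at least $m(G)-1$ is dense; $G$ is tight if it has exactly $m(G)$ dense vertices, each of degree exactly $m(G)-1$. (For a tight graph, all vertices of $T_i$ have the same degree in $G_i$.) *)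

(* A finite simple graph is a symmetric irreflexive relation
   e : rel V on a finType V. Induced subgraphs G[S] are handled by working
   relative to a vertex set S : {set V}. *)
From mathcomp Require Import all_boot.
Set Implicit Arguments. Unset Strict Implicit. Unset Printing Implicit Defensive.

Section Graphs.
Variables (V : finType) (e : rel V).

Definition deg_in (S : {set V}) (x : V) : nat := #|[set y in S | e x y]|.

(* m(G[S]) : the largest k such that G[S] has at least k vertices of degree
   at least k-1 (k = 0 always qualifies; k <= |S|). *)
Definition m_in (S : {set V}) : nat :=
  \max_(k < #|S|.+1 | k <= #|[set x in S | k.-1 <= deg_in S x]|) k.

Definition dense_in (S : {set V}) : {set V} :=
  [set x in S | (m_in S).-1 <= deg_in S x].

Definition tight_in (S : {set V}) : Prop :=
  #|dense_in S| = m_in S /\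
  (forall x, x \in dense_in S -> deg_in S x = (m_in S).-1).

Definition colouring_in (S : {set V}) (c : V -> nat) : Prop :=
  (forall x, x \in S -> 0 < c x) /\
  (forall x y, x \in S -> y \in S -> e x y -> c x != c y).

Definition colours_in (S : {set V}) (c : V -> nat) : seq nat :=
  undup [seq c x | x <- enum S].

Definition b_chromatic_in (S : {set V}) (c : V -> nat) (x : V) : Prop :=
  forall k, k \in colours_in S c -> k != c x -> exists2 y, y \in S & e x y && (c y == k).

Definition b_colouring_in (S : {set V}) (c : V -> nat) : Prop :=
  colouring_in S c /\
  (forall k, k \in colours_in S c -> exists2 x, x \in S & (c x = k) /\ b_chromatic_in S c x).

Definition has_b_colouring_exact (S : {set V}) (k : nat) : Prop :=
  exists c : V -> nat, b_colouring_in S c /\ size (colours_in S c) = k.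

(* complement relation and co-components (vertex sets of the connected
   components of the complement graph) *)
Definition compl_rel : rel V := [rel x y | (x != y) && ~~ e x y].

Definition co_component (C : {set V}) : Prop :=
  exists x, C = [set y | connect compl_rel x y].

End Graphs.

From mathcomp Require Import all_boot.
From Stdlib Require Import ClassicalEpsilon.
Set Implicit Arguments. Unset Strict Implicit. Unset Printing Implicit Defensive.

(* Every vertex outside a co-component C is adjacent to all of C, so
   deg_G x = deg_C x + |V \ C| for x in C.  Comparing with a dense vertex of C,
   the vertices of C of degree at least p in G[C] are exactly those of T ∩ C;
   hence m(G[C]) = p + 1 and G[C] is tight with dense set T ∩ C.
   In a b-colouring of a tight graph with m colours, every b-chromatic vertex
   has degree at least m - 1, hence is dense: the dense vertices get distinct
   colours and meet every colour class.  Since colours never cross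
   co-components, a b-colouring of G restricts to b-colourings of the G[C],
   with |T ∩ C| = m(G[C]) colours each; conversely b-colourings of the
   co-components with disjoint palettes glue to a b-colouring of G, whose
   colours are again in bijection with T. *)

Section Colourings.
Variables (V : finType) (e : rel V).

Lemma colours_inP (S : {set V}) (c : V -> nat) k :
  reflect (exists2 x, x \in S & c x = k) (k \in colours_in S c).
Proof.
rewrite mem_undup; apply: (iffP mapP) => [[x]|[x xS <-]].
  by rewrite mem_enum => xS ->; exists x.
by exists x; rewrite ?mem_enum.
Qed.

Lemma mem_colours_in (S : {set V}) (c : V -> nat) x : x \in S -> c x \in colours_in S c.
Proof. by move=> xS; apply/colours_inP; exists x. Qed.

Lemma colours_inS (S1 S2 : {set V}) (c : V -> nat) :
  S1 \subset S2 -> {subset colours_in S1 c <= colours_in S2 c}.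
Proof.
by move=> sS12 k /colours_inP [x xS1 <-]; rewrite mem_colours_in ?(subsetP sS12).
Qed.

Lemma b_chromatic_deg (S : {set V}) (c : V -> nat) x : x \in S ->
  b_chromatic_in e S c x -> (size (colours_in S c)).-1 <= deg_in e S x.
Proof.
move=> xS bx; rewrite -(size_rem (mem_colours_in c xS)) /deg_in cardE -(size_map c).
apply: uniq_leq_size; first exact/rem_uniq/undup_uniq.
move=> k; rewrite rem_filter ?undup_uniq // mem_filter /= => /andP[kx kS].
have [y yS /andP[xy /eqP <-]] := bx k kS kx.
by apply: map_f; rewrite mem_enum inE yS.
Qed.

Lemma size_colours_in (S A : {set V}) (c : V -> nat) : A \subset S ->
  {in A &, injective c} -> (forall x, x \in S -> exists2 a, a \in A & c a = c x) ->
  size (colours_in S c) = #|A|.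
Proof.
move=> sAS injc coverA; rewrite cardE -(size_map c); apply: perm_size.
apply: uniq_perm; first exact: undup_uniq.
  by rewrite map_inj_in_uniq ?enum_uniq // => a b; rewrite !mem_enum; apply: injc.
move=> k; apply/colours_inP/mapP => [[x /coverA [a aA <-] <-]|[a]].
  by exists a; rewrite ?mem_enum.
by rewrite mem_enum => aA ->; exists a => //; apply: (subsetP sAS).
Qed.

Lemma b_colouring_dense (S : {set V}) (c : V -> nat) :
  #|dense_in e S| = m_in e S -> b_colouring_in e S c ->
  size (colours_in S c) = m_in e S ->
  {in dense_in e S &, injective c} /\
  (forall x, x \in S -> exists2 a, a \in dense_in e S & c a = c x).
Proof.
move=> cardD [_ bc] sizeK.
have bD x : x \in S -> b_chromatic_in e S c x -> x \in dense_in e S.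
  by move=> xS bx; rewrite inE xS -sizeK b_chromatic_deg.
split.
  apply/dinjectiveP; apply: (leq_size_uniq (undup_uniq [seq c x | x <- enum S])).
    by move=> k /bc [x xS [<- bx]]; rewrite map_f ?mem_enum ?bD.
  by rewrite size_map -cardE cardD sizeK.
move=> x xS; have [a aS [ca ba]] := bc _ (mem_colours_in c xS).
by exists a => //; apply: bD.
Qed.

Lemma m_in_eq (S : {set V}) k :
  k <= #|S| -> k <= #|[set x in S | k.-1 <= deg_in e S x]| ->
  (forall j, j <= #|S| -> j <= #|[set x in S | j.-1 <= deg_in e S x]| -> j <= k) ->
  m_in e S = k.
Proof.
move=> kS kdeg kmax; apply/eqP; rewrite eqn_leq; apply/andP; split.
  by apply/bigmax_leqP => j jdeg; apply: kmax; rewrite // -ltnS.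
exact: (@leq_bigmax_cond _ _ (fun j : 'I_#|S|.+1 => nat_of_ord j)
                          (Ordinal (kS : k < #|S|.+1))).
Qed.

End Colourings.

Section CoComponents.
Variables (V : finType) (e : rel V).
Hypothesis e_sym : symmetric e.

Definition cocomp (x : V) : {set V} := [set y | connect (compl_rel e) x y].

Lemma compl_rel_sym : symmetric (compl_rel e).
Proof. by move=> x y; rewrite /compl_rel /= eq_sym e_sym. Qed.

Lemma cocomp_refl x : x \in cocomp x.
Proof. by rewrite inE connect0. Qed.

Lemma cocomp_eq x y : y \in cocomp x -> cocomp y = cocomp x.
Proof.
rewrite inE => xy; apply/setP => z; rewrite !inE.
by rewrite (same_connect (sym_connect_sym compl_rel_sym) xy).
Qed.

Lemma co_component_cocomp x : co_component e (cocomp x).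
Proof. by exists x. Qed.

Lemma co_componentE C x : co_component e C -> x \in C -> C = cocomp x.
Proof. by move=> [y ->] xy; rewrite (cocomp_eq xy). Qed.

Lemma co_component_edge C x y : co_component e C -> x \in C -> y \notin C -> e x y.
Proof.
move=> CC xC; rewrite (co_componentE CC xC) inE.
have [<-|x_neq_y] := eqVneq x y; first by rewrite connect0.
by apply: contraNT => nxy; apply: connect1; rewrite /compl_rel /= x_neq_y nxy.
Qed.

Lemma deg_in_setT_co_component C x : co_component e C -> x \in C ->
  deg_in e [set: V] x = deg_in e C x + #|~: C|.
Proof.
move=> CC xC; rewrite /deg_in -(cardsID C [set y in [set: V] | e x y]).
congr (_ + _); apply: eq_card => y; rewrite !inE; first by rewrite andbC.
by case yC: (y \in C); rewrite //= (co_component_edge CC xC) ?yC.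
Qed.

Lemma colouring_co_component_neq C c x y : colouring_in e [set: V] c ->
  co_component e C -> x \in C -> y \notin C -> c x != c y.
Proof. by move=> [_ cP] CC xC yC; rewrite cP ?in_setT ?(co_component_edge CC). Qed.

Lemma b_colouring_co_component C c : b_colouring_in e [set: V] c ->
  co_component e C -> b_colouring_in e C c.
Proof.
move=> [[cpos cP] bc] CC; have cc : colouring_in e [set: V] c by [].
have colourC k x : k \in colours_in C c -> c x = k -> x \in C.
  move=> /colours_inP [z zC <-] czx; apply: contraTT (eqxx (c z)) => xC.
  by rewrite -{2}czx (colouring_co_component_neq cc CC zC xC).
split; first by split=> [x _|x y _ _]; [apply: cpos | apply: cP].
move=> k kC; have [x _ [cxk bx]] := bc k (colours_inS (subsetT C) kC).
exists x; first exact: colourC cxk.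
split=> // k' k'C k'x.
have [y _ /andP[xy /eqP cyk']] := bx k' (colours_inS (subsetT C) k'C) k'x.
by exists y; [apply: colourC k'C cyk' | rewrite xy cyk' eqxx].
Qed.

(* Colour [k] on the co-component of rank [i] becomes [k * N + i] with [i < N]:
   different co-components get disjoint palettes. *)
Definition glue (F : {set V} -> V -> nat) (x : V) : nat :=
  F (cocomp x) x * #|{set V}| + enum_rank (cocomp x).

Lemma glue_eq F x y :
  glue F x = glue F y <-> cocomp x = cocomp y /\ F (cocomp x) x = F (cocomp y) y.
Proof.
rewrite /glue; split=> [Fxy|[cxy Fxy]]; last by rewrite Fxy cxy.
have N_gt0 : 0 < #|{set V}| := leq_ltn_trans (leq0n _) (ltn_ord (enum_rank (cocomp x))).
have rank_xy : nat_of_ord (enum_rank (cocomp x)) = enum_rank (cocomp y).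
  by move/(congr1 (modn^~ #|{set V}|)): Fxy; rewrite !modnMDl !modn_small.
split; first exact/enum_rank_inj/ord_inj.
by move: Fxy; rewrite rank_xy => /addIn /eqP; rewrite eqn_pmul2r // => /eqP.
Qed.

Lemma glue_b_colouring F : (forall C, co_component e C -> b_colouring_in e C (F C)) ->
  b_colouring_in e [set: V] (glue F).
Proof.
move=> bF; have cF x : colouring_in e (cocomp x) (F (cocomp x)).
  by case: (bF _ (co_component_cocomp x)).
split.
  split=> [x _|x y _ _ xy].
    have [Fpos _] := cF x; rewrite addn_gt0 muln_gt0 Fpos ?cocomp_refl //=.
    by rewrite (leq_ltn_trans (leq0n _) (ltn_ord (enum_rank (cocomp x)))).
  apply/negP => /eqP /glue_eq [xy_comp Fxy]; have [_ Fprop] := cF x.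
  have yx : y \in cocomp x by rewrite xy_comp cocomp_refl.
  by move: (Fprop x y (cocomp_refl x) yx xy); rewrite Fxy xy_comp eqxx.
move=> _ /colours_inP [x _ <-]; have [_ bx] := bF _ (co_component_cocomp x).
have [a ax [Fa ba]] := bx _ (mem_colours_in (F (cocomp x)) (cocomp_refl x)).
exists a => //; split; first by apply/glue_eq; rewrite (cocomp_eq ax) Fa.
rewrite -(cocomp_eq ax) in ba.
move=> _ /colours_inP [y _ <-] nya.
have [ya | y_out] := boolP (y \in cocomp a); last first.
  by exists y; rewrite // (co_component_edge (co_component_cocomp a) (cocomp_refl a)) ?eqxx.
have nFya : F (cocomp a) y != F (cocomp a) a.
  by apply: contra_neq nya => Fya; apply/glue_eq; rewrite (cocomp_eq ya).
have [z za /andP[az /eqP Fz]] := ba _ (mem_colours_in _ ya) nFya.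
by exists z => //; rewrite az; apply/eqP/glue_eq; rewrite (cocomp_eq za) (cocomp_eq ya).
Qed.
End CoComponents.

Section TightJoin.
Variables (V : finType) (e : rel V).
Hypotheses (e_sym : symmetric e) (Gtight : tight_in e [set: V]).

Local Notation T := (dense_in e [set: V]).

Section OneCoComponent.
Variables (C : {set V}) (p : nat).
Hypotheses (CC : co_component e C) (degT : forall x, x \in T :&: C -> deg_in e C x = p)
  (cardT : #|T :&: C| = p.+1).

Lemma dense_co_componentE x : x \in C -> (p <= deg_in e C x) = (x \in T).
Proof.
move=> xC; apply/idP/idP => [px|xT]; last by rewrite degT ?in_setI ?xT.
have [t tTC] : exists t, t \in T :&: C by apply/card_gt0P; rewrite cardT.
have /setIP [tT tC] := tTC.
have m_pred : (m_in e [set: V]).-1 = p + #|~: C|.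
  by rewrite -(degT tTC) -(deg_in_setT_co_component e_sym CC tC) (Gtight.2 t tT).
by rewrite inE in_setT m_pred (deg_in_setT_co_component e_sym CC xC) leq_add2r.
Qed.

Lemma m_in_co_component : m_in e C = p.+1.
Proof.
have TC : T :&: C = [set x in C | p <= deg_in e C x].
  apply/setP => x; rewrite in_setI [in RHS]inE.
  by case xC: (x \in C); rewrite /= ?andbT ?andbF ?dense_co_componentE.
apply: m_in_eq; first by rewrite -cardT subset_leq_card ?subsetIr.
  by rewrite -TC cardT.
move=> j _ jdeg; rewrite leqNgt; apply/negP => pj.
have [x] : exists x, x \in [set x in C | j.-1 <= deg_in e C x].
  by apply/card_gt0P; apply: leq_trans jdeg; apply: leq_ltn_trans pj.
rewrite inE => /andP[xC jx].
have px : p < deg_in e C x by apply: leq_trans jx; rewrite -ltnS (ltn_predK pj).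
have xT : x \in T by rewrite -dense_co_componentE // ltnW.
by move: px; rewrite degT ?in_setI ?xT // ltnn.
Qed.

Lemma dense_in_co_component : dense_in e C = T :&: C.
Proof.
apply/setP => x; rewrite [in LHS]inE m_in_co_component in_setI /=.
by case xC: (x \in C); rewrite /= ?andbT ?andbF ?dense_co_componentE.
Qed.

End OneCoComponent.

Hypothesis dense_regular : forall C : {set V}, co_component e C ->
  exists p : nat,
    (forall x, x \in T :&: C -> deg_in e C x = p) /\ #|T :&: C| = p.+1.

Lemma tight_co_component C : co_component e C ->
  [/\ tight_in e C, m_in e C = #|T :&: C| & dense_in e C = T :&: C].
Proof.
move=> CC; have [p [degT cardT]] := dense_regular CC.
rewrite /tight_in (dense_in_co_component CC degT cardT).
rewrite (m_in_co_component CC degT cardT) cardT.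
by split=> //; split=> // x; apply: degT.
Qed.

Lemma has_b_colouring_exact_co_component C :
  has_b_colouring_exact e [set: V] (m_in e [set: V]) -> co_component e C ->
  has_b_colouring_exact e C (m_in e C).
Proof.
move=> [c [bc sizec]] CC; have [_ -> _] := tight_co_component CC.
have [injT coverT] := b_colouring_dense Gtight.1 bc sizec.
exists c; split; first exact: b_colouring_co_component.
apply: size_colours_in (subsetIr T C) _ _.
  by move=> a b /setIP [aT _] /setIP [bT _]; apply: injT.
move=> x xC; have [a aT cax] := coverT x (in_setT x).
exists a => //; rewrite in_setI aT; apply: contraTT (eqxx (c a)) => aC.
by rewrite {1}cax (colouring_co_component_neq e_sym bc.1 CC xC aC).
Qed.

Lemma has_b_colouring_exact_join :
  (forall C, co_component e C -> has_b_colouring_exact e C (m_in e C)) ->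
  has_b_colouring_exact e [set: V] (m_in e [set: V]).
Proof.
move=> bC; pose F C := epsilon (inhabits (fun _ : V => 0)) (fun c =>
  b_colouring_in e C c /\ size (colours_in C c) = m_in e C).
have FP C : co_component e C ->
    b_colouring_in e C (F C) /\ size (colours_in C (F C)) = m_in e C.
  by move=> CC; apply: (epsilon_spec _ _ (bC C CC)).
have Fdense x : {in T :&: cocomp e x &, injective (F (cocomp e x))} /\
    (forall y, y \in cocomp e x ->
       exists2 a, a \in T :&: cocomp e x & F (cocomp e x) a = F (cocomp e x) y).
  have [tightx _ <-] := tight_co_component (co_component_cocomp e x).
  have [bF sizeF] := FP _ (co_component_cocomp e x).
  exact: b_colouring_dense tightx.1 bF sizeF.
exists (glue e F); split; first by apply: (glue_b_colouring e_sym) => C /FP [].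
rewrite -Gtight.1; apply: size_colours_in (subsetT T) _ _.
  move=> a b aT bT /glue_eq [ab Fab]; have [injF _] := Fdense a.
  rewrite -ab in Fab; apply: injF => //; rewrite in_setI ?aT ?bT ?cocomp_refl //.
  by rewrite ab cocomp_refl.
move=> x _; have [_ coverF] := Fdense x.
have [a /setIP [aT ax] Fa] := coverF x (cocomp_refl e x).
by exists a => //; apply/glue_eq; rewrite (cocomp_eq e_sym ax) Fa.
Qed.

End TightJoin.

Theorem mainTheorem12 (V : finType) (e : rel V)
  (e_sym : symmetric e) (e_irr : irreflexive e)
  (Gtight : tight_in e [set: V])
  (hyp : forall C : {set V}, co_component e C ->
     exists p : nat,
       (forall x, x \in dense_in e [set: V] :&: C -> deg_in e C x = p) /\
       #|dense_in e [set: V] :&: C| = p.+1) :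
  (forall C : {set V}, co_component e C ->
     [/\ tight_in e C,
         m_in e C = #|dense_in e [set: V] :&: C| &
         dense_in e C = dense_in e [set: V] :&: C]) /\
  (has_b_colouring_exact e [set: V] (m_in e [set: V]) <->
   (forall C : {set V}, co_component e C -> has_b_colouring_exact e C (m_in e C))).
Proof.
split; first exact: tight_co_component.
split=> [bG C|]; first exact: has_b_colouring_exact_co_component.
exact: has_b_colouring_exact_join.
Qed.
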